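(* Let $\mathcal{T}$ be a single-elimination tournament. Then: (i) every $u\in V(\mathcal{T})$ has $P(u)\ne\emptyset$; (ii) for all $u,v\in V(\mathcal{T})$, $P(u)=P(v)$ if and only if $u=v$; (iii) for $u,v\in V(\mathcal{T})$, $P(u)\subseteq P(v)$ if and only if there exists a directed walk from $u$ to $v$; (iv) for all distinct $u,v\in V(\mathcal{T})$, either $P(u)\cap P(v)=\emptyset$, or $P(u)\subsetneq P(v)$, or $P(v)\subsetneq P(u)$; (v) for every match $x\in M(\mathcal{T})$, the sets $\{P(u):u\in N^-(x)\}$ partition $P(x)$, and $P(u)\subsetneq P(x)$ and $P(u)\ne\emptyset$ for all $u\in N^-(x)$.
   Context: A single-elimination tournament is a finite directed graph $\mathcal{T}$ such that: (a) $\mathcal{T}$ has exactly one sink (vertex with no out-neighbours); (b) every non-sink vertex has exactly one out-neighbour; (c) $\mathcal{T}$ has no directed cycles; (d) $|N^-(v)|\ne 1$ for every vertex $v$, where $N^-(v)$ (resp. $N^+(v)$) denotes the set of in-neighbours (resp. out-neighbours) of $v$. The players $P(\mathcal{T})$ are the sources (vertices with no in-neighbours) and the matches are $M(\mathcal{T})=V(\mathcal{T})\setminus P(\mathcal{T})$. A directed walk from $u$ to $v$ is a sequence $(u_1,\dots,u_t)$, $t\ge1$, with $u_1=u$, $u_t=v$ and $u_{i+1}\in N^+(u_i)$ for $1\le i<t$. For a vertex $u$, $P(u)$ is the set of players $a$ for which there is a directed walk from $a$ to $u$. *)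

From mathcomp Require Import all_boot.
Set Implicit Arguments. Unset Strict Implicit. Unset Printing Implicit Defensive.

Section Tournament.
Variables (T : finType) (e : rel T).

Definition outN (v : T) : {set T} := [set w | e v w].
Definition inN (v : T) : {set T} := [set u | e u v].

(* directed walk (u_1,...,u_t), t >= 1, from u to v: u :: p with
   consecutive vertices joined by arcs and last vertex v *)
Definition dwalk (u v : T) : Prop :=
  exists p : seq T, path e u p /\ last u p = v.

Definition has_dcycle : Prop :=
  exists (u : T) (p : seq T), p != [::] /\ path e u p /\ last u p = u.

Definition is_sink (v : T) : Prop := outN v = set0.

Definition single_elimination_tournament : Prop :=
  [/\ (exists s, is_sink s /\ forall s', is_sink s' -> s' = s),
      (forall v, ~ is_sink v -> #|outN v| = 1),
      ~ has_dcycle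
    & (forall v, #|inN v| <> 1)].

Definition players : {set T} := [set a | inN a == set0].
Definition matches : {set T} := ~: players.

(* P(u) : players a with a directed walk from a to u.  The boolean
   reachability test is MathComp's connect e a u (reflexive-transitive
   closure of e), which reflects dwalk a u (fingraph.connectP). *)
Definition Pl (u : T) : {set T} := [set a in players | connect e a u].

End Tournament.

(** The arcs of a single-elimination tournament define a partial function
    (out-degree at most one) without cycles, so the vertices reachable from a
    fixed vertex form a chain; hence two in-neighbours of the same vertex have
    no common ancestor. Acyclicity and finiteness give every vertex a player
    among its ancestors, which makes [P] order-reflecting: if [P(u) ⊆ P(v)]
    but [u] does not reach [v], then [v] reaches [u] strictly, say through the
    in-neighbour [w] of [u], and the players above a second in-neighbour of
    [u] (which exists because no in-degree equals one) would be common
    ancestors of two in-neighbours of [u]. The remaining claims follow from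
    this together with antisymmetry of reachability. *)
From mathcomp Require Import all_boot.

Set Implicit Arguments.
Unset Strict Implicit.
Unset Printing Implicit Defensive.

Lemma dwalkP (T : finType) (e : rel T) u v : reflect (dwalk e u v) (connect e u v).
Proof. by apply: (iffP connectP) => [[p p_e ->]|[p [p_e <-]]]; exists p. Qed.

Lemma connect_first_step (T : finType) (e : rel T) a y :
  connect e a y -> a != y -> exists2 z, e a z & connect e z y.
Proof.
move=> /connectP[[|z p] /= p_e ->]; first by rewrite eqxx.
by case/andP: p_e => e_az p_e _; exists z => //; apply/connectP; exists p.
Qed.

Lemma connect_last_step (T : finType) (e : rel T) v u :
  connect e v u -> v != u -> exists2 w, connect e v w & e w u.
Proof.
rewrite -[connect e v u]connect_rev eq_sym => vu /(connect_first_step vu)[w].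
by rewrite connect_rev; exists w.
Qed.

Lemma outdeg1_functional (T : finType) (e : rel T) :
  (forall v, ~ is_sink e v -> #|outN e v| = 1) ->
  forall u v w, e u v -> e u w -> v = w.
Proof.
move=> outdeg u v w e_uv e_uw.
have v_out : v \in outN e u by rewrite inE.
have /eqP/cards1P[c out_c] : #|outN e u| = 1.
  by apply: outdeg => sink_u; rewrite /is_sink in sink_u; rewrite sink_u inE in v_out.
have w_out : w \in outN e u by rewrite inE.
by move: v_out w_out; rewrite out_c !inE => /eqP-> /eqP->.
Qed.

Lemma no_dcycle_acyclic (T : finType) (e : rel T) :
  ~ has_dcycle e -> forall u v, e u v -> ~~ connect e v u.
Proof.
move=> no_cycle u v e_uv; apply/connectP => -[p p_e p_last].
by apply: no_cycle; exists u, (v :: p); rewrite /= e_uv p_e -p_last.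
Qed.

Section PlayerSets.
Variables (T : finType) (e : rel T).
Hypothesis e_functional : forall u v w, e u v -> e u w -> v = w.
Hypothesis e_acyclic : forall u v, e u v -> ~~ connect e v u.
Hypothesis indeg_neq1 : forall v, #|inN e v| <> 1.

Lemma connect_antisym u v : connect e u v -> connect e v u -> u = v.
Proof.
move=> uv vu; apply/eqP/negPn/negP => /(connect_last_step uv)[w uw e_wv].
by move: (e_acyclic e_wv); rewrite (connect_trans vu uw).
Qed.

Lemma connect_total_from a x y :
  connect e a x -> connect e a y -> connect e x y || connect e y x.
Proof.
move=> /connectP[p p_e ->]; elim: p a p_e => [|z p IHp] a /=; first by move=> _ ->.
case/andP=> e_az p_e ay; have [<-|a_ne_y] := eqVneq a y.
  by rewrite orbC (connect_trans (connect1 e_az)) //; apply/connectP; exists p.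
have [z' e_az' z'y] := connect_first_step ay a_ne_y.
by rewrite (e_functional e_az e_az') in p_e *; apply: IHp.
Qed.

Lemma Pl_disjoint_in_neighbours w w' u :
  e w u -> e w' u -> w != w' -> [disjoint Pl e w & Pl e w'].
Proof.
move=> e_wu e_w'u w_ne_w'; rewrite -setI_eq0.
apply: contraT => /set0Pn[a /setIP[/setIdP[_ aw] /setIdP[_ aw']]].
wlog ww' : w w' e_wu e_w'u w_ne_w' aw aw' / connect e w w'.
  move=> sym; case/orP: (connect_total_from aw aw') => [|w'w]; first exact: sym.
  by apply: (sym w' w) => //; rewrite eq_sym.
have [z e_wz zw'] := connect_first_step ww' w_ne_w'.
by move: (e_acyclic e_w'u); rewrite (e_functional e_wu e_wz) zw'.
Qed.

Lemma Pl_neq0 u : Pl e u != set0.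
Proof.
(* An ancestor of [u] with fewest ancestors has no in-neighbour. *)
pose nancestors a := #|[set b | connect e b a]|.
case: (@arg_minnP _ u (fun a => connect e a u) nancestors (connect0 e u)) => a au a_min.
apply/set0Pn; exists a; rewrite inE au andbT inE; apply/eqP/setP => w.
rewrite inE in_set0; apply/negP => e_wa.
have anc_w_proper : [set b | connect e b w] \proper [set b | connect e b a].
  apply/properP; split.
    by apply/subsetP => b; rewrite !inE => bw; apply: connect_trans bw (connect1 e_wa).
  by exists a; rewrite !inE ?connect0 ?(negbTE (e_acyclic e_wa)).
move: (a_min w (connect_trans (connect1 e_wa) au)).
by rewrite leqNgt (proper_card anc_w_proper).
Qed.

Lemma Pl_subset_connect u v : connect e u v -> Pl e u \subset Pl e v.
Proof.
by move=> uv; apply/subsetP => a /setIdP[a_pl au]; rewrite inE a_pl (connect_trans au uv).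
Qed.

Lemma other_in_neighbour w u : e w u -> exists2 w', e w' u & w' != w.
Proof.
move=> e_wu; have w_in : w \in inN e u by rewrite inE.
have /set0Pn[w' /setD1P[w'_ne_w]] : inN e u :\ w != set0.
  rewrite -card_gt0 lt0n; apply/eqP => card0; apply: (@indeg_neq1 u).
  by rewrite (cardsD1 w) w_in card0.
by rewrite inE; exists w'.
Qed.

Lemma Pl_subset u v : (Pl e u \subset Pl e v) = connect e u v.
Proof.
apply/idP/idP => [/subsetP uv|]; last exact: Pl_subset_connect.
have /set0Pn[a a_u] := Pl_neq0 u.
have /setIdP[_ av] := uv a a_u; case/setIdP: a_u => _ au.
case/orP: (connect_total_from au av) => // vu; have [-> //|v_ne_u] := eqVneq v u.
have [w vw e_wu] := connect_last_step vu v_ne_u.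
have [w' e_w'u w'_ne_w] := other_in_neighbour e_wu.
have /set0Pn[b b_w'] := Pl_neq0 w'.
have /setIdP[b_pl bv] := uv b (subsetP (Pl_subset_connect (connect1 e_w'u)) b b_w').
have b_w : b \in Pl e w by rewrite inE b_pl (connect_trans bv vw).
have w_ne_w' : w != w' by rewrite eq_sym.
by rewrite (disjointFr (Pl_disjoint_in_neighbours e_wu e_w'u w_ne_w') b_w) in b_w'.
Qed.

Lemma Pl_inj : injective (Pl e).
Proof.
by move=> u v Puv; apply: connect_antisym; rewrite -Pl_subset Puv.
Qed.

Lemma Pl_proper u v : connect e u v -> u != v -> Pl e u \proper Pl e v.
Proof. by move=> uv u_ne_v; rewrite properEneq (inj_eq Pl_inj) u_ne_v Pl_subset. Qed.

Lemma Pl_laminar u v : u != v ->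
  Pl e u :&: Pl e v = set0 \/ Pl e u \proper Pl e v \/ Pl e v \proper Pl e u.
Proof.
move=> u_ne_v; have [|/set0Pn[a]] := eqVneq (Pl e u :&: Pl e v) set0; first by left.
case/setIP=> /setIdP[_ au] /setIdP[_ av]; right.
case/orP: (connect_total_from au av) => [uv|vu]; [left|right]; apply: Pl_proper => //.
by rewrite eq_sym.
Qed.

Lemma Pl_proper_in_neighbour u x : e u x -> Pl e u \proper Pl e x.
Proof.
move=> e_ux; apply: Pl_proper (connect1 e_ux) _.
by apply: contraTneq (e_acyclic e_ux) => ->; rewrite connect0.
Qed.

Lemma Pl_partition x :
  x \in matches e -> partition [set Pl e u | u in inN e x] (Pl e x).
Proof.
rewrite inE => x_match.
have P_neq0 : set0 \notin [set Pl e u | u in inN e x].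
  by apply/imsetP => -[u _ /esym/eqP]; rewrite (negbTE (Pl_neq0 u)).
have in_disjoint : {in inN e x &, forall u v, v != u -> [disjoint Pl e u & Pl e v]}.
  move=> u v; rewrite !inE => e_ux e_vx v_ne_u.
  by apply: Pl_disjoint_in_neighbours e_ux e_vx _; rewrite eq_sym.
have [tiP _] := trivIimset in_disjoint P_neq0.
rewrite /partition tiP P_neq0 cover_imset eqEsubset !andbT; apply/andP; split.
  by apply/bigcupsP => u; rewrite inE => /connect1/Pl_subset_connect.
apply/subsetP => a a_x; have /setIdP[a_pl ax] := a_x.
have a_ne_x : a != x by apply: contraNneq x_match => <-.
have [w aw e_wx] := connect_last_step ax a_ne_x.
by apply/bigcupP; exists w; [rewrite inE | apply/setIdP].
Qed.

End PlayerSets.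

Theorem proposition3p3 (T : finType) (e : rel T) :
  single_elimination_tournament e ->
  [/\ (forall u : T, Pl e u != set0),
      (forall u v : T, Pl e u = Pl e v <-> u = v),
      (forall u v : T, Pl e u \subset Pl e v <-> dwalk e u v),
      (forall u v : T, u != v ->
         (Pl e u :&: Pl e v = set0) \/ (Pl e u \proper Pl e v)
           \/ (Pl e v \proper Pl e u))
    & (forall x : T, x \in matches e ->
         partition [set Pl e u | u in inN e x] (Pl e x) /\
         (forall u, u \in inN e x -> Pl e u \proper Pl e x /\ Pl e u != set0))].
Proof.
case=> _ /outdeg1_functional e_fun /no_dcycle_acyclic e_acyc indeg.
split.
- exact: Pl_neq0.
- by move=> u v; split=> [/(Pl_inj e_fun e_acyc indeg)|->].
- by move=> u v; rewrite (Pl_subset e_fun e_acyc indeg); split=> /dwalkP.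
- exact: Pl_laminar.
- move=> x x_match; split; first exact: Pl_partition.
  by move=> u; rewrite inE => e_ux; split; [exact: Pl_proper_in_neighbour | exact: Pl_neq0].
Qed.
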